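(* Let $A$ be a nonempty set of positive integers and let $n$ be a positive integer. Then (a) $\displaystyle\sum_{k=1}^{n}N^p_A(k)\,\omega(n-k)=\sum_{k=1}^{n}\tau_A(k)\big(q^e_{\mathbb N\setminus A}(n-k)-q^o_{\mathbb N\setminus A}(n-k)\big)$; (b) $\displaystyle\sum_{k=1}^{n}(-1)^{n-k}N^q_A(k)\,o(n-k)=\sum_{k=1}^{n}\tau^s_A(k)\big(p^e_{\mathbb N\setminus A}(n-k)-p^o_{\mathbb N\setminus A}(n-k)\big)$.
   Context: $\mathbb N$ is the set of positive integers. For a set $B$ of positive integers: $N^p_B(n)$ (resp. $N^q_B(n)$) is the total number of parts, summed over all partitions (resp. partitions into pairwise distinct parts) of $n$ with parts in $B$; $p^e_B(m)$, $p^o_B(m)$ count partitions of $m$ with parts in $B$ having an even, resp. odd, number of parts; $q^e_B(m)$, $q^o_B(m)$ are the analogous counts for partitions into distinct parts from $B$; $p^e_B(0)=q^e_B(0)=1$, $p^o_B(0)=q^o_B(0)=0$. $\tau_A(n)=\#\{a\in A:a\mid n\}$, $\tau^s_A(n)=\sum_{a\in A,\,a\mid n}(-1)^{n/a-1}$. $\omega(m)=1$ if $m=0$, $\omega(m)=(-1)^k$ if $m=\frac{3k^2\pm k}{2}$ for an integer $k\ge1$, and $0$ otherwise. $o(m)$ is the number of partitions of $m$ into distinct odd parts, $o(0)=1$. *)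

From mathcomp Require Import all_boot all_order all_algebra.
Set Implicit Arguments. Unset Strict Implicit. Unset Printing Implicit Defensive.
Import GRing.Theory Num.Theory.

(* A partition of n is encoded by its multiplicity function
   m : 'I_n -> 'I_n.+1, where m i is the multiplicity of the part i.+1
   (every part of a partition of n lies in 1..n and has multiplicity <= n). *)
Definition mults (n : nat) := {ffun 'I_n -> 'I_n.+1}.

Definition is_part (B : pred nat) (n : nat) (m : mults n) : bool :=
  ((\sum_(i < n) i.+1 * m i)%N == n) && [forall i, (0 < m i) ==> B i.+1].

Definition nparts (n : nat) (m : mults n) : nat := (\sum_(i < n) m i)%N.

Definition distinct_parts (n : nat) (m : mults n) : bool := [forall i, m i <= 1].

Definition Np (B : pred nat) (n : nat) : nat :=
  (\sum_(m : mults n | is_part B m) nparts m)%N.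
Definition Nq (B : pred nat) (n : nat) : nat :=
  (\sum_(m : mults n | is_part B m && distinct_parts m) nparts m)%N.

Definition pe (B : pred nat) (n : nat) : nat :=
  #|[set m : mults n | is_part B m && ~~ odd (nparts m)]|.
Definition po (B : pred nat) (n : nat) : nat :=
  #|[set m : mults n | is_part B m && odd (nparts m)]|.
Definition qe (B : pred nat) (n : nat) : nat :=
  #|[set m : mults n | [&& is_part B m, distinct_parts m & ~~ odd (nparts m)]]|.
Definition qo (B : pred nat) (n : nat) : nat :=
  #|[set m : mults n | [&& is_part B m, distinct_parts m & odd (nparts m)]]|.

Definition oddp (n : nat) : nat :=
  #|[set m : mults n | is_part odd m && distinct_parts m]|.

(* tau_A(n) = #{a in A : a | n}   (for n >= 1 every such a lies in 1..n) *)
Definition tau (A : pred nat) (n : nat) : nat :=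
  (\sum_(1 <= a < n.+1 | A a && (a %| n)) 1)%N.

Definition taus (A : pred nat) (n : nat) : int :=
  (\sum_(1 <= a < n.+1 | A a && (a %| n)%N) (-1) ^+ (n %/ a - 1))%R.

(* omega(m) = 1 if m = 0, (-1)^k if m = (3k^2 +- k)/2 for some k >= 1, else 0.
   The generalized pentagonal numbers (3k^2 +- k)/2, k >= 1, are pairwise
   distinct and >= k, so the sum below has at most one nonzero term. *)
Definition omega (m : nat) : int :=
  if m == 0%N then 1%R else
  (\sum_(1 <= k < m.+1 | (m == (3 * k ^ 2 - k) %/ 2)%N || (m == (3 * k ^ 2 + k) %/ 2)%N)
      (-1) ^+ k)%R.

(* Both identities compare coefficients of formal power series, computed here
   with polynomials over int modulo X^(N+1).  Write P_B = prod_(b in B) 1/(1 - x^b),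
   Q_B = prod_(b in B) (1 + x^b).  Marking one part at a time gives
     sum_k N^p_A(k) x^k = P_A * sum_(a in A) x^a/(1 - x^a),
     sum_k N^q_A(k) x^k = Q_A * sum_(a in A) x^a/(1 + x^a),
   and the second factors are sum_k tau_A(k) x^k and sum_k tau^s_A(k) x^k.
   For (a), Euler's pentagonal number theorem prod_j (1 - x^j) = sum_m omega(m) x^m
   (obtained from Shanks' finite identity) turns P_A * prod_j (1 - x^j) into
   prod_(j notin A) (1 - x^j), the generating function of q^e - q^o on N \ A.
   For (b), Euler's identity Q_N * prod_(j odd) (1 - x^j) = 1, whose second factor
   has coefficients (-1)^m o(m), turns Q_A * prod_(j odd) (1 - x^j) into
   prod_(j notin A) 1/(1 + x^j), the generating function of p^e - p^o on N \ A. *)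

From mathcomp Require Import all_boot all_order all_algebra.
From mathcomp Require Import zify ring.
Import GRing.Theory Num.Theory.
Local Open Scope ring_scope.

Set Implicit Arguments. Unset Strict Implicit. Unset Printing Implicit Defensive.

(** * Congruences modulo X^(N+1) *)

Section CongruenceModXn.

Variable R : nzRingType.
Implicit Types p q r u : {poly R}.

Definition eqmodX (N : nat) p q := forall i, (i <= N)%N -> p`_i = q`_i.

Lemma eqmodX_sym N p q : eqmodX N p q -> eqmodX N q p.
Proof. by move=> pq i le_iN; rewrite pq. Qed.

Lemma eqmodX_trans N p q r : eqmodX N p q -> eqmodX N q r -> eqmodX N p r.
Proof. by move=> pq qr i le_iN; rewrite pq ?qr. Qed.

Lemma eqmodXD N p p' q q' :
  eqmodX N p p' -> eqmodX N q q' -> eqmodX N (p + q) (p' + q').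
Proof. by move=> pp' qq' i le_iN; rewrite !coefD pp' ?qq'. Qed.

Lemma eqmodXM N p p' q q' :
  eqmodX N p p' -> eqmodX N q q' -> eqmodX N (p * q) (p' * q').
Proof.
move=> pp' qq' i le_iN; rewrite !coefM; apply: eq_bigr => j _.
have le_jN : (j <= N)%N by have := ltn_ord j; lia.
by rewrite pp' // qq' //; lia.
Qed.

Lemma eqmodX_prod N (I : Type) (s : seq I) (P : pred I) (F G : I -> {poly R}) :
  (forall i, P i -> eqmodX N (F i) (G i)) ->
  eqmodX N (\prod_(i <- s | P i) F i) (\prod_(i <- s | P i) G i).
Proof. by move=> FG; apply: (big_ind2 (eqmodX N)) => // *; apply: eqmodXM. Qed.

Lemma eqmodX_mulIl N u p q :
  u`_0 = 1 -> eqmodX N (u * p) (u * q) -> eqmodX N p q.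
Proof.
move=> u0 upq; elim: N upq => [|N IH] upq i.
  rewrite leqn0 => /eqP ->; have := upq 0%N isT.
  by rewrite !coefM !big_ord1 u0 !mul1r.
have pq : eqmodX N p q by apply: IH => k le_kN; apply: upq; lia.
rewrite leq_eqVlt ltnS => /orP[/eqP-> | /pq //].
have := upq N.+1 (leqnn _).
rewrite !coefM !(big_ord_recl N.+1) u0 !mul1r subn0.
suff -> : \sum_(j < N.+1) u`_(lift ord0 j) * p`_(N.+1 - lift ord0 j) =
          \sum_(j < N.+1) u`_(lift ord0 j) * q`_(N.+1 - lift ord0 j) by apply: addIr.
by apply: eq_bigr => j _; rewrite pq // lift0; lia.
Qed.

Lemma eqmodX_prod1 N (I : Type) (s : seq I) (P : pred I) (F : I -> {poly R}) :
  (forall i, P i -> eqmodX N (F i) 1) -> eqmodX N (\prod_(i <- s | P i) F i) 1.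
Proof. by move=> F1; have := @eqmodX_prod N I s P F (fun=> 1) F1; rewrite big1_eq. Qed.

Lemma coef0_1subX j : (0 < j)%N -> (1 - 'X^j : {poly R})`_0 = 1.
Proof. by case: j => // j _; rewrite coefB coef1 coefXn subr0. Qed.

End CongruenceModXn.

(** * Euler's pentagonal number theorem *)

(* [pentagonal_neg k] is the generalised pentagonal number of [-k]. *)
Definition pentagonal (k : nat) := ((3 * k ^ 2 - k) %/ 2)%N.
Definition pentagonal_neg (k : nat) := ((3 * k ^ 2 + k) %/ 2)%N.

Lemma omegaE m : omega m =
  if m == 0%N then 1 else
  \sum_(1 <= k < m.+1 | (m == pentagonal k) || (m == pentagonal_neg k)) (-1) ^+ k.
Proof. by []. Qed.

Lemma pentagonalS k : pentagonal k.+1 = (k * k.+1 + 'C(k.+2, 2))%N.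
Proof. rewrite /pentagonal bin2 -divn2 /=; nia. Qed.

Lemma pentagonal_negE k : pentagonal_neg k = (k * k + 'C(k.+1, 2))%N.
Proof. rewrite /pentagonal_neg bin2 -divn2 /=; nia. Qed.

Lemma pentagonal_bounds k : (0 < k)%N ->
  (k <= pentagonal k < pentagonal_neg k)%N.
Proof.
case: k => // k _; rewrite pentagonalS pentagonal_negE binS bin1 mulSn.
by apply/andP; split; lia.
Qed.

Definition euler (N : nat) : {poly int} := \prod_(j < N) (1 - 'X^(j.+1)).

Definition pentagonal_poly (n : nat) : {poly int} :=
  1 + \sum_(1 <= k < n.+1) (-1) ^+ k *: ('X^(pentagonal k) + 'X^(pentagonal_neg k)).

Definition shanks_term (n k a : nat) : {poly int} :=
  (-1) ^+ k *: 'X^(n * k + 'C(k.+1, 2))%N * \prod_(a <= j < n.+1) (1 - 'X^j).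

Lemma shanks_term_succ n k : (k <= n)%N ->
  shanks_term n.+1 k k.+1 =
  shanks_term n k k.+1 + (shanks_term n k.+1 k.+1 - shanks_term n k k).
Proof.
move=> le_kn; rewrite /shanks_term.
have -> : (n.+1 * k + 'C(k.+1, 2) = (n * k + 'C(k.+1, 2)) + k)%N by rewrite mulSn; lia.
have -> : (n * k.+1 + 'C(k.+2, 2) = (n * k + 'C(k.+1, 2)) + (n.+1 + k))%N.
  by rewrite binS bin1 mulnS; lia.
move: (n * k + 'C(k.+1, 2))%N => e.
rewrite big_nat_recr /=; last lia.
rewrite (@big_ltn _ _ _ k) /=; last lia.
rewrite !exprD -!mul_polyC (exprS (-1 : int) k) mulN1r polyCN.
move: ((-1) ^+ k)%:P ('X^e) ('X^k) ('X^(n.+1)) (\prod_(k.+1 <= i < n.+1) _).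
by move=> s a b c Q; ring.
Qed.

(* D. Shanks, A short proof of an identity of Euler, Proc. AMS 2 (1951). *)
Lemma shanks_identity n :
  \sum_(k < n.+1) shanks_term n k k.+1 = pentagonal_poly n.
Proof.
elim: n => [|n IH].
  by rewrite big_ord1 /shanks_term /pentagonal_poly !big_geq // mulr1 scale1r addr0.
have term00 : shanks_term n 0 0 = 0.
  by rewrite /shanks_term big_ltn // expr0 subrr mul0r mulr0.
rewrite big_ord_recr /= -(big_mkord xpredT (fun k => shanks_term n.+1 k k.+1)).
rewrite (eq_big_nat _ _ (F2 := fun k =>
  shanks_term n k k.+1 + (shanks_term n k.+1 k.+1 - shanks_term n k k))); last first.
  by move=> k /andP[_ lt_kn]; apply: shanks_term_succ.
rewrite big_split /= telescope_sumr // term00 subr0 big_mkord IH.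
rewrite /pentagonal_poly [in RHS]big_nat_recr //= -!addrA; congr (_ + (_ + _)).
rewrite /shanks_term !big_geq // !mulr1 -pentagonalS -pentagonal_negE.
by rewrite scalerDr.
Qed.

Lemma euler_shanks N :
  eqmodX N (euler N) (\sum_(k < N.+1) shanks_term N k k.+1).
Proof.
move=> i le_iN; rewrite big_ord_recl coefD coef_sum big1 ?addr0; last first.
  move=> k _; rewrite /shanks_term -scalerAl coefZ coefXnM ifT ?mulr0 //.
  by rewrite lift0 binS bin1; lia.
by rewrite /shanks_term muln0 expr0 scale1r mul1r big_add1 big_mkord.
Qed.

Lemma coef_pentagonal_poly N m : (m <= N)%N -> (pentagonal_poly N)`_m = omega m.
Proof.
move=> le_mN; rewrite /pentagonal_poly omegaE coefD coef1 coef_sum.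
under eq_bigr do rewrite coefZ coefD !coefXn.
have vanish k : (m < k)%N ->
    (-1) ^+ k * ((m == pentagonal k)%:R + (m == pentagonal_neg k)%:R) = 0 :> int.
  move=> lt_mk; have /andP[? ?] := pentagonal_bounds (leq_ltn_trans (leq0n m) lt_mk).
  by rewrite !ltn_eqF ?addr0 ?mulr0 //; lia.
case: posnP vanish => [-> | m_gt0] vanish.
  rewrite big1_seq ?addr0 // => k.
  by rewrite mem_index_iota => /andP[_ /andP[lt_mk _]]; exact: vanish.
rewrite add0r [in RHS]big_mkcond [in LHS](big_cat_nat (n := m.+1)) //=.
rewrite [X in _ + X]big1_seq ?addr0 => [|k]; last first.
  by rewrite mem_index_iota => /andP[_ /andP[lt_mk _]]; exact: vanish.
apply: eq_big_nat => k /andP[k_gt0 _]; have /andP[_ lt_pp'] := pentagonal_bounds k_gt0.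
case: eqP => [-> | _] /=; last by case: eqP; rewrite ?add0r ?mulr1 ?mulr0.
by rewrite (ltn_eqF lt_pp') addr0 mulr1.
Qed.

Lemma coef_euler N m : (m <= N)%N -> (euler N)`_m = omega m.
Proof. by move=> le_mN; rewrite euler_shanks // shanks_identity coef_pentagonal_poly. Qed.

Definition geom (s : int) (j N : nat) : {poly int} :=
  \sum_(c < N.+1) s ^+ c *: 'X^(j * c)%N.

Lemma geom_telescope (s : int) j M :
  (1 - s *: 'X^j) * \sum_(c < M) s ^+ c *: 'X^(j * c)%N = 1 - s ^+ M *: 'X^(j * M)%N.
Proof.
elim: M => [|M IH]; first by rewrite big_ord0 mulr0 muln0 expr0 scale1r subrr.
rewrite big_ord_recr /= mulrDr IH mulnS exprD -!mul_polyC exprS polyCM.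
by move: s%:P (s ^+ M)%:P ('X^j) ('X^(j * M)%N) => x y u v; ring.
Qed.

Lemma mul_geom s j N : (0 < j)%N -> eqmodX N ((1 - s *: 'X^j) * geom s j N) 1.
Proof.
move=> j_gt0 i le_iN; rewrite /geom geom_telescope coefB coefZ coefXn ltn_eqF //; last nia.
by rewrite mulr0 subr0.
Qed.

Lemma mul_geom1 j N : (0 < j)%N -> eqmodX N ((1 - 'X^j) * geom 1 j N) 1.
Proof. by move=> j_gt0; have := @mul_geom 1 j N j_gt0; rewrite scale1r. Qed.

Lemma mul_geomN1 j N : (0 < j)%N -> eqmodX N ((1 + 'X^j) * geom (-1) j N) 1.
Proof. by move=> j_gt0; have := @mul_geom (-1) j N j_gt0; rewrite scaleN1r opprK. Qed.

Lemma sum_natmul_telescope j M :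
  (1 - 'X^j) * \sum_(c < M.+1) c%:R *: 'X^(j * c)%N =
  \sum_(c < M) 'X^(j * c.+1)%N - M%:R *: 'X^(j * M.+1)%N :> {poly int}.
Proof.
elim: M => [|M IH]; first by rewrite big_ord1 big_ord0 !scale0r mulr0 subr0.
rewrite big_ord_recr /= mulrDr IH big_ord_recr /= (mulnS j M.+1) exprD.
rewrite -!mul_polyC mulrS polyCD.
by move: (\sum_(i < M) _) (M%:R : int)%:P ('X^j) ('X^(j * M.+1)%N) => x y u v; ring.
Qed.

Lemma sum_natmul_geom j N : (0 < j)%N ->
  eqmodX N (\sum_(c < N.+1) c%:R *: 'X^(j * c)%N) (geom 1 j N * ('X^j * geom 1 j N)).
Proof.
move=> j_gt0; apply: (eqmodX_mulIl (coef0_1subX _ j_gt0)).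
have shift : 'X^j * geom 1 j N = \sum_(c < N.+1) 'X^(j * c.+1)%N.
  by rewrite /geom mulr_sumr; apply: eq_bigr => c _; rewrite expr1n scale1r -exprD mulnS.
apply: (@eqmodX_trans _ _ _ ('X^j * geom 1 j N)).
  rewrite sum_natmul_telescope shift big_ord_recr /=; apply: eqmodXD => // i le_iN.
  by rewrite coefN coefZ !coefXn ltn_eqF ?mulr0 ?oppr0 //; nia.
rewrite (mulrA (1 - 'X^j)) -[X in eqmodX _ X]mul1r.
by apply: eqmodXM => //; apply/eqmodX_sym/mul_geom1.
Qed.

Lemma coef_geom s a N m : (0 < a)%N -> (m <= N)%N ->
  (geom s a N)`_m = if (a %| m)%N then s ^+ (m %/ a) else 0.
Proof.
move=> a_gt0 le_mN; rewrite /geom coef_sum.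
under eq_bigr do rewrite coefZ coefXn.
have [a_dvd_m | a_ndvd_m] := boolP (a %| m)%N; last first.
  rewrite big1 // => c _; rewrite (_ : m == a * c = false) ?mulr0 //.
  by apply: contraNF a_ndvd_m => /eqP->; rewrite dvdn_mulr.
have lt_q : (m %/ a < N.+1)%N by rewrite ltnS (leq_trans (leq_div m a)).
rewrite (bigD1 (Ordinal lt_q)) //= mulnC divnK // eqxx mulr1 big1 ?addr0 // => c ne_c.
rewrite (_ : m == a * c = false) ?mulr0 //; apply: contraNF ne_c => /eqP m_eq.
by apply/eqP/val_inj; rewrite /= m_eq mulKn.
Qed.

(** * Weighted partition generating polynomials *)

(* In [wgf w N], the weight of a partition is the product of the [w j c] over its
   parts [j] of multiplicity [c]. *)
Definition wgf_factor (w : nat -> nat -> int) (M j : nat) : {poly int} :=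
  \sum_(c < M) w j c *: 'X^(j * c)%N.

Definition wgf (w : nat -> nat -> int) (N : nat) : {poly int} :=
  \prod_(j < N) wgf_factor w N.+1 j.+1.

Lemma prod_scale_Xn (I : Type) (r : seq I) (a : I -> int) (e : I -> nat) :
  \prod_(i <- r) (a i *: 'X^(e i)) = (\prod_(i <- r) a i) *: 'X^(\sum_(i <- r) e i)%N.
Proof.
elim: r => [|x r IH]; first by rewrite !big_nil scale1r expr0.
by rewrite !big_cons IH exprD -scalerAl -scalerAr scalerA.
Qed.

Lemma coef_wgf_diag w n : (wgf w n)`_n =
  \sum_(m : mults n | (\sum_(i < n) i.+1 * m i)%N == n) \prod_(i < n) w i.+1 (m i).
Proof.
rewrite /wgf /wgf_factor bigA_distr_bigA coef_sum [RHS]big_mkcond.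
apply: eq_bigr => m _; rewrite prod_scale_Xn coefZ coefXn eq_sym.
by case: eqP; rewrite ?mulr1 ?mulr0.
Qed.

Lemma coef_wgf_factor w M j i : (0 < j)%N -> (i < M)%N ->
  (wgf_factor w M j)`_i = \sum_(c < i.+1) w j c * (i == j * c)%N%:R.
Proof.
move=> j_gt0 lt_iM; rewrite /wgf_factor coef_sum.
under eq_bigr do rewrite coefZ coefXn.
rewrite [RHS](big_ord_widen M (fun c => w j c * (i == j * c)%N%:R)) // [RHS]big_mkcond.
apply: eq_bigr => c _; case: ltnP => // le_ic.
by rewrite ltn_eqF ?mulr0 //; apply: (leq_trans le_ic); rewrite leq_pmull.
Qed.

Lemma wgf_factor_eqmodX w M M' j k : (0 < j)%N -> (k < M)%N -> (k < M')%N ->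
  eqmodX k (wgf_factor w M j) (wgf_factor w M' j).
Proof. by move=> j_gt0 lt_kM lt_kM' i le_ik; rewrite !coef_wgf_factor //; lia. Qed.

Lemma wgf_factor_eqmodX_const w M j k : (k < j)%N -> (k < M)%N ->
  eqmodX k (wgf_factor w M j) (w j 0%N)%:P.
Proof.
move=> lt_kj lt_kM i le_ik; rewrite coef_wgf_factor ?(leq_ltn_trans _ lt_kj) //; last lia.
rewrite big_ord_recl muln0 coefC big1 ?addr0 => [|c _]; first by case: eqP; rewrite ?mulr1 ?mulr0.
by rewrite ltn_eqF ?mulr0 // lift0 mulnS; lia.
Qed.

(* Below degree j the factor of index j is the constant [w j 0]. *)
Lemma coef_wgf w N k : (k <= N)%N -> (forall j, (k < j)%N -> w j 0%N = 1) ->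
  (wgf w N)`_k = (wgf w k)`_k.
Proof.
move=> le_kN w_0; apply: (_ : eqmodX k (wgf w N) (wgf w k)) => //.
rewrite /wgf -!(big_mkord xpredT (fun j => wgf_factor w _ j.+1)).
rewrite (big_cat_nat (n := k)) //= -[X in eqmodX _ _ X]mulr1; apply: eqmodXM.
  by apply: eqmodX_prod => j _; apply: wgf_factor_eqmodX.
rewrite big_nat_cond; apply: eqmodX_prod1 => j /andP[/andP[le_kj _] _].
have := wgf_factor_eqmodX_const w (M := N.+1) (j := j.+1) (k := k).
by rewrite w_0 //; apply; lia.
Qed.

Definition wpart (B : pred nat) (distinct : bool) (s : int) (j c : nat) : int :=
  if (c == 0%N) || B j && (~~ distinct || (c <= 1)%N) then s ^+ c else 0.

Lemma prod_if (R : comPzSemiRingType) (I : finType) (P : pred I) (F : I -> R) :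
  \prod_i (if P i then F i else 0) = if [forall i, P i] then \prod_i F i else 0.
Proof.
case: (boolP [forall i, P i]) => [/forallP P_all | /forallPn[i not_Pi]].
  by apply: eq_bigr => i _; rewrite P_all.
by rewrite (bigD1 i) //= (negbTE not_Pi) mul0r.
Qed.

Lemma prod_wpart B d s n (m : mults n) :
  \prod_(i < n) wpart B d s i.+1 (m i) =
  if [forall i, (0 < m i)%N ==> B i.+1] && (~~ d || distinct_parts m)
  then s ^+ nparts m else 0.
Proof.
rewrite /wpart prod_if /nparts (big_morph _ (exprD s) (expr0 s)).
congr (if _ then _ else _); apply/forallP/andP => [wpart_m | [/forallP B_m d_m] i].
  split; first by apply/forallP => i; have := wpart_m i; case: posnP => //= _ /andP[].
  case: d wpart_m => //= wpart_m; apply/forallP => i; have := wpart_m i.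
  by case: (m i) => [[|[|c]] ?] //=; rewrite andbF.
case: posnP => //= m_i_gt0; rewrite (implyP (B_m i)) //=.
by case: d d_m => //= /forallP ->.
Qed.

Lemma coef_wgf_wpart B d s N k : (k <= N)%N ->
  (wgf (wpart B d s) N)`_k =
  \sum_(m : mults k | is_part B m && (~~ d || distinct_parts m)) s ^+ nparts m.
Proof.
move=> le_kN; rewrite coef_wgf // coef_wgf_diag [RHS]big_mkcond [LHS]big_mkcond.
apply: eq_bigr => m _; rewrite prod_wpart /is_part -andbA.
by case: (_ == k).
Qed.

Definition partgf (B : pred nat) (s : int) (N : nat) : {poly int} :=
  \prod_(j < N | B j.+1) geom s j.+1 N.

Definition distgf (B : pred nat) (s : int) (N : nat) : {poly int} :=
  \prod_(j < N | B j.+1) (1 + s *: 'X^(j.+1)).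

Lemma wgf_factor_wpart_false B s N j :
  wgf_factor (wpart B false s) N.+1 j = if B j then geom s j N else 1.
Proof.
rewrite /wgf_factor /wpart /geom; case: (B j) => /=.
  by apply: eq_bigr => c _; rewrite orbT.
by rewrite big_ord_recl big1 ?addr0 // => [|c _]; rewrite ?scale0r // muln0 scale1r.
Qed.

Lemma wgf_factor_wpart_true B s M j : (1 < M)%N ->
  wgf_factor (wpart B true s) M j = if B j then 1 + s *: 'X^j else 1.
Proof.
case: M => [|[|M]] // _; rewrite /wgf_factor /wpart !big_ord_recl big1 ?addr0 => [|c _].
  by rewrite /= muln0 muln1 scale1r; case: (B j); rewrite ?scale0r ?addr0.
by rewrite /= andbF scale0r.
Qed.

Lemma wgf_wpart_false B s N : wgf (wpart B false s) N = partgf B s N.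
Proof.
by rewrite /wgf /partgf [RHS]big_mkcond; apply: eq_bigr => j _; rewrite wgf_factor_wpart_false.
Qed.

Lemma wgf_wpart_true B s N : wgf (wpart B true s) N = distgf B s N.
Proof.
rewrite /wgf /distgf [RHS]big_mkcond; case: N => [|N]; first by rewrite !big_ord0.
by apply: eq_bigr => j _; rewrite wgf_factor_wpart_true.
Qed.

Lemma coef_partgf B s N k : (k <= N)%N ->
  (partgf B s N)`_k = \sum_(m : mults k | is_part B m) s ^+ nparts m.
Proof.
move=> le_kN; rewrite -wgf_wpart_false coef_wgf_wpart //.
by apply: eq_bigl => m; rewrite andbT.
Qed.

Lemma coef_distgf B s N k : (k <= N)%N ->
  (distgf B s N)`_k = \sum_(m : mults k | is_part B m && distinct_parts m) s ^+ nparts m.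
Proof. by move=> le_kN; rewrite -wgf_wpart_true coef_wgf_wpart. Qed.

Lemma card_even_sub_odd (T : finType) (P : pred T) (f : T -> nat) :
  #|[set x | P x && ~~ odd (f x)]|%:Z - #|[set x | P x && odd (f x)]|%:Z =
  \sum_(x | P x) (-1) ^+ f x.
Proof.
rewrite (bigID (fun x => odd (f x))) /= addrC !cardsE -!sum1_card -!natz !natr_sum -sumrN.
congr (_ + _); apply: eq_big => x //= /andP[_ f_x]; rewrite -signr_odd.
  by rewrite (negbTE f_x).
by rewrite f_x.
Qed.

Lemma pe_sub_po B N k : (k <= N)%N ->
  (pe B k)%:Z - (po B k)%:Z = (partgf B (-1) N)`_k.
Proof. by move=> le_kN; rewrite coef_partgf // -card_even_sub_odd. Qed.

Lemma qe_sub_qo B N k : (k <= N)%N ->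
  (qe B k)%:Z - (qo B k)%:Z = (distgf B (-1) N)`_k.
Proof.
move=> le_kN; rewrite coef_distgf // -card_even_sub_odd /qe /qo.
by congr (_ - _); congr Posz; apply: eq_card => m; rewrite !inE andbA.
Qed.

Lemma sign_nparts_odd n (m : mults n) :
  is_part odd m -> (-1) ^+ nparts m = (-1) ^+ n :> int.
Proof.
case/andP=> /eqP weight_m /forallP odd_m; rewrite -[in RHS]weight_m /nparts.
rewrite !(big_morph _ (exprD (-1)) (expr0 (-1))); apply: eq_bigr => i _.
have [-> | /(implyP (odd_m i)) odd_i] := posnP (m i); first by rewrite muln0.
by rewrite exprM -[(-1) ^+ i.+1]signr_odd odd_i expr1.
Qed.

Lemma oddp_sign N k : (k <= N)%N ->
  (-1) ^+ k * (oddp k)%:Z = (distgf odd (-1) N)`_k.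
Proof.
move=> le_kN; rewrite coef_distgf // /oddp cardsE -sum1_card -natz natr_sum mulr_sumr.
by apply: eq_big => [m | m /andP[part_m _]]; rewrite ?inE // mulr1 sign_nparts_odd.
Qed.

(** * Counting parts *)

(* Weighting the multiplicity [c] of the part [i.+1] by [c] counts its occurrences. *)
Definition wmark (i : nat) (w : nat -> nat -> int) (j c : nat) : int :=
  if j == i.+1 then c%:R * w j c else w j c.

Lemma sum_nparts n (P : pred (mults n)) :
  (\sum_(m | P m) nparts m)%:Z = \sum_(i < n) \sum_(m | P m) (m i)%:R.
Proof.
rewrite -natz natr_sum -exchange_big; apply: eq_bigr => m _.
by rewrite /nparts natr_sum.
Qed.

Lemma coef_wgf_wmark B d n (i : 'I_n) :
  (wgf (wmark i (wpart B d 1)) n)`_n =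
  \sum_(m : mults n | is_part B m && (~~ d || distinct_parts m)) (m i)%:R.
Proof.
rewrite coef_wgf_diag [RHS]big_mkcond [LHS]big_mkcond; apply: eq_bigr => m _.
rewrite [X in if _ then X else _](bigD1 i) //= {1}/wmark eqxx -mulrA.
have -> : \prod_(j < n | j != i) wmark i (wpart B d 1) j.+1 (m j) =
          \prod_(j < n | j != i) wpart B d 1 j.+1 (m j).
  by apply: eq_bigr => j ne_ji; rewrite /wmark eqSS (negbTE (ne_ji : (j : nat) != i)).
have := prod_wpart B d 1 m; rewrite (bigD1 i) // => ->; rewrite expr1n /is_part -andbA.
set part_m := (_ && _).
by case: (_ == n); case: part_m; rewrite ?mulr1 ?mulr0.
Qed.

Lemma wgf_wmark w N (i : 'I_N) T :
  eqmodX N (wgf_factor (wmark i w) N.+1 i.+1) (wgf_factor w N.+1 i.+1 * T) ->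
  eqmodX N (wgf (wmark i w) N) (wgf w N * T).
Proof.
move=> marked; rewrite /wgf (bigD1 i) // [X in eqmodX _ _ (X * _)](bigD1 i) // mulrAC.
have -> : \prod_(j < N | j != i) wgf_factor (wmark i w) N.+1 j.+1 =
          \prod_(j < N | j != i) wgf_factor w N.+1 j.+1.
  by apply: eq_bigr => j ne_ji; rewrite /wgf_factor /wmark eqSS (negbTE (ne_ji : (j : nat) != i)).
exact: eqmodXM.
Qed.

Definition divgf (B : pred nat) (s : int) (N : nat) : {poly int} :=
  \sum_(j < N | B j.+1) 'X^(j.+1) * geom s j.+1 N.

Lemma coef_sum_wgf_wmark w B s N k :
  (forall j, w j 0%N = 1) ->
  (forall i : 'I_N, eqmodX N (wgf_factor (wmark i w) N.+1 i.+1)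
     (wgf_factor w N.+1 i.+1 * (if B i.+1 then 'X^(i.+1) * geom s i.+1 N else 0))) ->
  (k <= N)%N ->
  \sum_(i < k) (wgf (wmark i w) k)`_k = (wgf w N * divgf B s N)`_k.
Proof.
move=> w_0 marked le_kN; rewrite [divgf _ _ _]big_mkcond mulr_sumr coef_sum.
rewrite (big_ord_widen N (fun i => (wgf (wmark i w) k)`_k)) // [LHS]big_mkcond.
apply: eq_bigr => i _; case: ltnP => [lt_ik | le_ki].
  rewrite -(@coef_wgf _ N) // => [|j lt_kj]; last by rewrite /wmark ifN ?w_0 //; lia.
  exact: wgf_wmark (marked i) _ le_kN.
by case: (B i.+1); rewrite ?mulr0 ?coef0 // mulrCA coefXnM ltnS le_ki.
Qed.

Lemma wgf_factor_wmark_false B i N :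
  wgf_factor (wmark i (wpart B false 1)) N.+1 i.+1 =
  if B i.+1 then \sum_(c < N.+1) c%:R *: 'X^(i.+1 * c)%N else 0.
Proof.
rewrite /wgf_factor /wmark /wpart eqxx; case: (B i.+1) => /=.
  by apply: eq_bigr => c _; rewrite orbT expr1n mulr1.
by apply: big1 => -[[|c] ?]; rewrite ?mul0r ?mulr0 scale0r.
Qed.

Lemma wgf_factor_wmark_true B i M : (1 < M)%N ->
  wgf_factor (wmark i (wpart B true 1)) M i.+1 = if B i.+1 then 'X^(i.+1) else 0.
Proof.
case: M => [|[|M]] // _; rewrite /wgf_factor /wmark /wpart eqxx !big_ord_recl big1 ?addr0.
  by rewrite /= mul0r scale0r add0r muln1 mul1r; case: (B i.+1); rewrite /= ?scale1r ?scale0r.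
by move=> c _; rewrite /= andbF mulr0 scale0r.
Qed.

Lemma Np_partgf A N k : (k <= N)%N -> (Np A k)%:Z = (partgf A 1 N * divgf A 1 N)`_k.
Proof.
move=> le_kN; rewrite /Np sum_nparts -wgf_wpart_false.
rewrite -(coef_sum_wgf_wmark (B := A) (s := 1) _ _ le_kN) => [|j|i].
- by apply: eq_bigr => i _; rewrite coef_wgf_wmark; apply: eq_bigl => m; rewrite andbT.
- by rewrite /wpart eqxx.
rewrite wgf_factor_wmark_false wgf_factor_wpart_false.
by case: (A i.+1); [apply: sum_natmul_geom | rewrite mulr0].
Qed.

Lemma Nq_distgf A N k : (k <= N)%N -> (Nq A k)%:Z = (distgf A 1 N * divgf A (-1) N)`_k.
Proof.
move=> le_kN; rewrite /Nq sum_nparts -wgf_wpart_true.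
rewrite -(coef_sum_wgf_wmark (B := A) (s := -1) _ _ le_kN) => [|j|i].
- by apply: eq_bigr => i _; rewrite coef_wgf_wmark.
- by rewrite /wpart eqxx.
have lt1N : (1 < N.+1)%N by have := ltn_ord i; lia.
rewrite wgf_factor_wmark_true // wgf_factor_wpart_true //.
case: (A i.+1); last by rewrite mulr0.
rewrite mulrCA -[X in eqmodX _ X]mulr1 scale1r.
by apply: eqmodXM => //; apply/eqmodX_sym/mul_geomN1.
Qed.

Lemma coef_divgf B s N k : (k <= N)%N ->
  (divgf B s N)`_k = \sum_(1 <= a < k.+1 | B a && (a %| k)%N) s ^+ (k %/ a - 1).
Proof.
move=> le_kN; rewrite /divgf coef_sum big_add1 big_mkord [RHS]big_mkcond /=.
rewrite [RHS](big_ord_widen N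
  (fun i => if B i.+1 && (i.+1 %| k)%N then s ^+ (k %/ i.+1 - 1) else 0)) //.
rewrite [RHS]big_mkcond [LHS]big_mkcond /=.
apply: eq_bigr => i _; case: (B i.+1) => /=; last by rewrite if_same.
rewrite coefXnM ltnS; case: leqP => // lt_ik.
rewrite coef_geom //; last lia.
by rewrite dvdn_subl // divnBr // divnn.
Qed.

Lemma tau_divgf A N k : (k <= N)%N -> (tau A k)%:Z = (divgf A 1 N)`_k.
Proof.
move=> le_kN; rewrite coef_divgf // /tau -natz natr_sum.
by apply: eq_bigr => a _; rewrite expr1n.
Qed.

Lemma coef0_divgf B s N : (divgf B s N)`_0 = 0.
Proof. by rewrite coef_divgf // big_geq. Qed.

(** * Euler's identities *)

Lemma partgf_euler B N :
  eqmodX N (partgf B 1 N * euler N) (distgf (predC B) (-1) N).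
Proof.
rewrite /euler (bigID (fun j : 'I_N => B j.+1)) /= mulrA /partgf -big_split /=.
have -> : distgf (predC B) (-1) N = 1 * \prod_(j < N | ~~ B j.+1) (1 - 'X^(j.+1)).
  by rewrite mul1r; apply: eq_bigr => j _; rewrite scaleN1r.
by apply: eqmodXM => //; apply: eqmodX_prod1 => j _; rewrite mulrC; apply: mul_geom1.
Qed.

Lemma big_ord_even (T : Type) (idx : T) (op : Monoid.law idx) n (F : nat -> T) :
  \big[op/idx]_(j < n | ~~ odd j.+1) F j.+1 = \big[op/idx]_(j < n./2) F (j.+1).*2.
Proof.
elim: n => [|n IH]; first by rewrite !big_ord0.
rewrite big_mkcond big_ord_recr -big_mkcond /= IH uphalf_half.
case: (boolP (odd n)) => [odd_n | even_n] /=; last by rewrite Monoid.mulm1.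
rewrite add1n big_ord_recr /=; congr (op _ (F _)).
by rewrite -[in LHS](odd_double_half n) odd_n.
Qed.

Lemma euler_distgfT N :
  eqmodX N (euler N * distgf predT 1 N) (\prod_(j < N./2) (1 - 'X^((j.+1).*2))).
Proof.
have -> : euler N * distgf predT 1 N = \prod_(j < N) (1 - 'X^((j.+1).*2)).
  rewrite /euler /distgf -big_split /=; apply: eq_bigr => j _.
  by rewrite scale1r -muln2 exprM; move: ('X^(j.+1)) => x; ring.
rewrite -!(big_mkord xpredT (fun j => 1 - 'X^((j.+1).*2))).
rewrite (big_cat_nat (n := N./2)) //=; last by rewrite leq_half_double; lia.
rewrite -[X in eqmodX _ _ X]mulr1; apply: eqmodXM => //.
rewrite big_nat_cond; apply: eqmodX_prod1 => j /andP[/andP[le_N2j _] _] i le_iN.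
have lt_ij : (i < (j.+1).*2)%N by move: le_N2j; rewrite leq_half_double; lia.
by rewrite coefB coefXn coef1 (ltn_eqF lt_ij) subr0.
Qed.

Lemma distgf_split B s N : distgf B s N * distgf (predC B) s N = distgf predT s N.
Proof. by rewrite /distgf [RHS](bigID (fun j : 'I_N => B j.+1)). Qed.

Lemma eulerE N : euler N = distgf predT (-1) N.
Proof. by apply: eq_bigr => j _; rewrite scaleN1r. Qed.

Lemma distinct_odd_euler N : eqmodX N (distgf predT 1 N * distgf odd (-1) N) 1.
Proof.
pose E := distgf (predC odd) (-1) N.
have E0 : E`_0 = 1 by rewrite coef0_prod big1 // => j _; rewrite scaleN1r coef0_1subX.
apply: (eqmodX_mulIl E0); rewrite mulr1 mulrCA mulrC [E * _]mulrC /E distgf_split.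
rewrite -eulerE.
have -> : distgf (predC odd) (-1) N = \prod_(j < N | ~~ odd j.+1) (1 - 'X^(j.+1)).
  by apply: eq_bigr => j _; rewrite scaleN1r.
by rewrite (big_ord_even _ _ (fun j => 1 - 'X^j)); apply: euler_distgfT.
Qed.

Lemma distgf_odd_partgfC B N :
  eqmodX N (distgf B 1 N * distgf odd (-1) N) (partgf (predC B) (-1) N).
Proof.
pose V := distgf (predC B) 1 N.
have V0 : V`_0 = 1 by rewrite coef0_prod big1 // => j _; rewrite scale1r coefD coef1 coefXn addr0.
apply: (eqmodX_mulIl V0); apply: (@eqmodX_trans _ _ _ 1).
  by rewrite mulrA [V * _]mulrC distgf_split; apply: distinct_odd_euler.
apply: eqmodX_sym; rewrite /V /distgf /partgf -big_split /=.
by apply: eqmodX_prod1 => j _; rewrite scale1r; apply: mul_geomN1.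
Qed.

Lemma sum_coefM_eqmodX n (P Q T S : {poly int}) :
  T`_0 = 0 -> eqmodX n (P * Q) S ->
  \sum_(1 <= k < n.+1) (P * T)`_k * Q`_(n - k) = \sum_(1 <= k < n.+1) T`_k * S`_(n - k).
Proof.
have coefM_pos (U V : {poly int}) :
    U`_0 = 0 -> \sum_(1 <= k < n.+1) U`_k * V`_(n - k) = (U * V)`_n.
  move=> U0; rewrite coefM -(big_mkord xpredT (fun j => U`_j * V`_(n - j))).
  by rewrite big_ltn // U0 mul0r add0r.
move=> T0 PQ_S; rewrite coefM_pos ?coef0M ?T0 ?mulr0 // coefM_pos //.
have TPQ_TS : eqmodX n (T * (P * Q)) (T * S) by apply: eqmodXM.
by rewrite mulrAC mulrC TPQ_TS.
Qed.

Unset Implicit Arguments. Set Strict Implicit.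

Theorem theorem3 (A : pred nat) (hA0 : exists a, A a) (hApos : forall a, A a -> (0 < a)%N)
  (n : nat) (hn : (0 < n)%N) :
  (\sum_(1 <= k < n.+1) (Np A k)%:Z * omega (n - k)
     = \sum_(1 <= k < n.+1) (tau A k)%:Z *
         ((qe (predC A) (n - k))%:Z - (qo (predC A) (n - k))%:Z))
  /\
  (\sum_(1 <= k < n.+1) (-1) ^+ (n - k) * (Nq A k)%:Z * (oddp (n - k))%:Z
     = \sum_(1 <= k < n.+1) taus A k *
         ((pe (predC A) (n - k))%:Z - (po (predC A) (n - k))%:Z)).
Proof.
have le_subn k : (n - k <= n)%N := leq_subr k n.
split.
- transitivity (\sum_(1 <= k < n.+1) (partgf A 1 n * divgf A 1 n)`_k * (euler n)`_(n - k)).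
    apply: eq_big_nat => k /andP[_]; rewrite ltnS => le_kn.
    by rewrite (Np_partgf A le_kn) coef_euler.
  rewrite (sum_coefM_eqmodX (coef0_divgf _ _ _) (@partgf_euler A n)).
  apply: eq_big_nat => k /andP[_]; rewrite ltnS => le_kn.
  by rewrite (tau_divgf A le_kn) (qe_sub_qo _ (le_subn k)).
- transitivity (\sum_(1 <= k < n.+1)
    (distgf A 1 n * divgf A (-1) n)`_k * (distgf odd (-1) n)`_(n - k)).
    apply: eq_big_nat => k /andP[_]; rewrite ltnS => le_kn.
    by rewrite mulrAC mulrC (Nq_distgf A le_kn) (oddp_sign (le_subn k)).
  rewrite (sum_coefM_eqmodX (coef0_divgf _ _ _) (@distgf_odd_partgfC A n)).
  apply: eq_big_nat => k /andP[_]; rewrite ltnS => le_kn.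
  by rewrite (coef_divgf _ _ le_kn) (pe_sub_po _ (le_subn k)).
Qed.
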